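(* Let $\mathbb{F}$ be an algebraically closed field, $\mathbf{O}$ the split octonion algebra over $\mathbb{F}$, and $T_n\subseteq \mathbb{F}[\mathbf{O}^n]$ the algebra of trace ${\rm G}_2$-invariants. Let $w$ be a (non-associative) word in the letters $x_1,\ldots,x_n$ and write $\mathrm{tr}(w)$ for the function $\underline{a}\mapsto \mathrm{tr}(w(a_1,\ldots,a_n))$ on $\mathbf{O}^n$. For $1\le i_1,\ldots,i_k\le n$ write $\mathrm{tr}(i_1,\ldots,i_k)$ for the function $\underline{a}\mapsto\mathrm{tr}((\cdots((a_{i_1}a_{i_2})a_{i_3})\cdots)a_{i_k})$. Then: 1. If $w$ is not multilinear and $\deg(w)>2$, then $\mathrm{tr}(w)\equiv 0$ in $T_n$. 2. If $w$ is multilinear and is a product of the letters $x_{i_1},\ldots,x_{i_k}$ with $1\le i_1<\cdots<i_k\le n$, then $\mathrm{tr}(w)\equiv \pm\,\mathrm{tr}(i_1,\ldots,i_k)$ in $T_n$. 3. For all $1\le i_1<\cdots<i_k\le n$ with $k\ge 3$ and every permutation $\sigma\in\mathcal{S}_k$, $\mathrm{tr}(i_{\sigma(1)},\ldots,i_{\sigma(k)})\equiv (-1)^{\sigma}\,\mathrm{tr}(i_1,\ldots,i_k)$ in $T_n$.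
   Context: The split octonion algebra $\mathbf{O}$ is the 8-dimensional $\mathbb{F}$-vector space of formal matrices $a=\begin{pmatrix}\alpha&\mathbf{u}\\ \mathbf{v}&\beta\end{pmatrix}$ with $\alpha,\beta\in\mathbb{F}$, $\mathbf{u},\mathbf{v}\in\mathbb{F}^3$, with multiplication $\begin{pmatrix}\alpha&\mathbf{u}\\ \mathbf{v}&\beta\end{pmatrix}\begin{pmatrix}\alpha'&\mathbf{u}'\\ \mathbf{v}'&\beta'\end{pmatrix}=\begin{pmatrix}\alpha\alpha'+\mathbf{u}\cdot\mathbf{v}'&\alpha\mathbf{u}'+\beta'\mathbf{u}-\mathbf{v}\times\mathbf{v}'\\ \alpha'\mathbf{v}+\beta\mathbf{v}'+\mathbf{u}\times\mathbf{u}'&\beta\beta'+\mathbf{v}\cdot\mathbf{u}'\end{pmatrix}$ (dot product and cross product on $\mathbb{F}^3$). Trace $\mathrm{tr}(a)=\alpha+\beta$, norm $n(a)=\alpha\beta-\mathbf{u}\cdot\mathbf{v}$. ${\rm G}_2=\mathrm{Aut}(\mathbf{O})$. The algebra $T_n$ of trace ${\rm G}_2$-invariants is the subalgebra of the polynomial ring $\mathbb{F}[\mathbf{O}^n]$ generated by the functions $\underline{a}\mapsto n(a_i)$ ($1\le i\le n$) and $\underline{a}\mapsto\mathrm{tr}(w(a_1,\ldots,a_n))$ for all non-empty non-associative words $w$ in $x_1,\ldots,x_n$. $T_n$ is graded by total degree (the function $\mathrm{tr}(w)$ has degree the number of letters of $w$, $n(a_i)$ has degree 2); $T_n^+$ denotes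 the span of homogeneous elements of positive degree, and $f\equiv h$ in $T_n$ means $f-h\in (T_n^+)^2$. A word is multilinear if each letter occurs in it at most once. *)

From HB Require Import structures.
From mathcomp Require Import all_boot all_order all_algebra all_fingroup.
From mathcomp Require Import mpoly.
Set Implicit Arguments. Unset Strict Implicit. Unset Printing Implicit Defensive.
Import GRing.Theory.
Local Open Scope ring_scope.

Record vec3 (R : Type) := V3 { c1 : R; c2 : R; c3 : R }.
Record oct (R : Type) := Oct { oal : R; ou : vec3 R; ov : vec3 R; obe : R }.

Section Octonions.
Variable R : comRingType.
Definition dot3 (x y : vec3 R) : R := c1 x * c1 y + c2 x * c2 y + c3 x * c3 y.
Definition cross3 (x y : vec3 R) : vec3 R :=
  V3 (c2 x * c3 y - c3 x * c2 y) (c3 x * c1 y - c1 x * c3 y) (c1 x * c2 y - c2 x * c1 y).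
Definition add3 (x y : vec3 R) : vec3 R := V3 (c1 x + c1 y) (c2 x + c2 y) (c3 x + c3 y).
Definition scale3 (a : R) (x : vec3 R) : vec3 R := V3 (a * c1 x) (a * c2 x) (a * c3 x).
Definition opp3 (x : vec3 R) : vec3 R := V3 (- c1 x) (- c2 x) (- c3 x).

(* (α u; v β)(α' u'; v' β') =
   (αα' + u·v' ; αu' + β'u − v×v' ; α'v + βv' + u×u' ; ββ' + v·u') *)
Definition omul (a b : oct R) : oct R :=
  Oct (oal a * oal b + dot3 (ou a) (ov b))
      (add3 (add3 (scale3 (oal a) (ou b)) (scale3 (obe b) (ou a))) (opp3 (cross3 (ov a) (ov b))))
      (add3 (add3 (scale3 (oal b) (ov a)) (scale3 (obe a) (ov b))) (cross3 (ou a) (ou b)))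
      (obe a * obe b + dot3 (ov a) (ou b)).
Definition otr (a : oct R) : R := oal a + obe a.
Definition onorm (a : oct R) : R := oal a * obe a - dot3 (ou a) (ov a).
End Octonions.

Inductive word (n : nat) : Type :=
| Letter of 'I_n
| Mul of word n & word n.

Fixpoint letters n (w : word n) : seq 'I_n :=
  match w with Letter i => [:: i] | Mul u v => letters u ++ letters v end.
Definition wdeg n (w : word n) : nat := size (letters w).
Definition multilinear n (w : word n) : bool := uniq (letters w).

Fixpoint weval (R : comRingType) n (a : 'I_n -> oct R) (w : word n) : oct R :=
  match w with Letter i => a i | Mul u v => omul (weval a u) (weval a v) end.

Definition leftword n (x : 'I_n) (r : seq 'I_n) : word n :=
  foldl (fun w j => Mul w (Letter j)) (Letter x) r.

Section PolyFunctions.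
Variable F : fieldType.
Variable n : nat.
Notation P := {mpoly F[n * 8]}.

Definition crd (i : 'I_n) (j : 'I_8) : P := 'X_(mxvec_index i j).
(* the generic octonion: the i-th coordinate function O^n -> O *)
Definition gen (i : 'I_n) : oct P :=
  Oct (crd i 0) (V3 (crd i 1) (crd i 2) (crd i 3))
      (V3 (crd i 4) (crd i 5) (crd i 6)) (crd i 7).

Definition trw (w : word n) : P := otr (weval gen w).
Definition nrm (i : 'I_n) : P := onorm (gen i).
Definition trL (s : seq 'I_n) : P :=
  if s is x :: r then trw (leftword x r) else 0.

Inductive inT : P -> Prop :=
| inT_nrm i : inT (nrm i)
| inT_tr w : inT (trw w)
| inT_C c : inT c%:MP
| inT_add p q : inT p -> inT q -> inT (p + q)
| inT_mul p q : inT p -> inT q -> inT (p * q).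

Inductive inTplus : P -> Prop :=
| Tp_hom p d : inT p -> (0 < d)%N -> p \is d.-homog -> inTplus p
| Tp_0 : inTplus 0
| Tp_add p q : inTplus p -> inTplus q -> inTplus (p + q)
| Tp_scale c p : inTplus p -> inTplus (c *: p).

Inductive inTplus2 : P -> Prop :=
| Tp2_mul f g : inTplus f -> inTplus g -> inTplus2 (f * g)
| Tp2_0 : inTplus2 0
| Tp2_add p q : inTplus2 p -> inTplus2 q -> inTplus2 (p + q)
| Tp2_scale c p : inTplus2 p -> inTplus2 (c *: p).

(* f ≡ h in T_n  iff  f - h ∈ (T_n^+)^2 *)
Definition equivT (f h : P) : Prop := inTplus2 (f - h).
End PolyFunctions.

From Pilot Require Import Defs.
From HB Require Import structures.
From mathcomp Require Import all_boot all_order all_algebra all_fingroup.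
From mathcomp Require Import mpoly.
From mathcomp Require Import ring.
Import GRing.Theory.
Local Open Scope ring_scope.

(** Let M be the T_n^+-submodule of O ⊗ F[O^n] spanned by 1 and the values of
    words, and N ⊆ M the one in which the coefficient of 1 is taken in
    (T_n^+)^2, so that tr N ⊆ (T_n^+)^2 and M w + w M ⊆ N for every word w.
    By the quadratic identity xy + yx = tr(x) y + tr(y) x + (tr(xy) - tr(x) tr(y)) 1,
    anticommutators of words lie in M, and since O is alternative so does
    x(yz) + (xy)z.  Hence every word is congruent modulo M to ± a left-normed
    word in the same letters, and tr(w) ≡ ± tr(i_1,...,i_k) modulo (T_n^+)^2.
    Transposing two adjacent letters of a left-normed word of length at least 3
    changes the sign of its trace, because (ua)b + (ub)a = u(ab + ba); and a
    repeated letter gives (aa)c = tr(a) ac - n(a) c, whose trace lies in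
    (T_n^+)^2. *)

Section OctonionModule.
Variable R : comRingType.
Implicit Types (X Y : oct R) (t : R).

Definition oct_coords X :=
  let: Oct a (V3 u1 u2 u3) (V3 v1 v2 v3) b := X in (a, u1, u2, u3, v1, v2, v3, b).
Definition oct_of_coords (c : R * R * R * R * R * R * R * R) :=
  let: (a, u1, u2, u3, v1, v2, v3, b) := c in Oct a (V3 u1 u2 u3) (V3 v1 v2 v3) b.
Lemma oct_coordsK : cancel oct_coords oct_of_coords.
Proof. by case=> a [u1 u2 u3] [v1 v2 v3] b. Qed.
HB.instance Definition _ := Choice.copy (oct R) (can_type oct_coordsK).

Definition oadd X Y :=
  Oct (oal X + oal Y) (add3 (ou X) (ou Y)) (add3 (ov X) (ov Y)) (obe X + obe Y).
Definition oscale t X :=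
  Oct (t * oal X) (scale3 t (ou X)) (scale3 t (ov X)) (t * obe X).
Definition ozero : oct R := Oct 0 (V3 0 0 0) (V3 0 0 0) 0.
Definition oone : oct R := Oct 1 (V3 0 0 0) (V3 0 0 0) 1.

Lemma oct_ext X Y : oal X = oal Y ->
  c1 (ou X) = c1 (ou Y) -> c2 (ou X) = c2 (ou Y) -> c3 (ou X) = c3 (ou Y) ->
  c1 (ov X) = c1 (ov Y) -> c2 (ov X) = c2 (ov Y) -> c3 (ov X) = c3 (ov Y) ->
  obe X = obe Y -> X = Y.
Proof.
case: X => a [u1 u2 u3] [v1 v2 v3] b; case: Y => a' [u1' u2' u3'] [v1' v2' v3'] b'.
by move=> /= -> -> -> -> -> -> -> ->.
Qed.

End OctonionModule.

Arguments oadd {R}.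
Arguments oscale {R}.
Arguments oone {R}.
Arguments ozero {R}.

Ltac oct_ring := apply: oct_ext;
  rewrite /= /oadd /oscale /ozero /oone /omul /otr /onorm /dot3 /cross3 /add3 /scale3 /opp3 /=;
  ring.

Section OctonionIdentities.
Variable R : comRingType.
Implicit Types (X Y Z : oct R) (t : R).

Lemma oaddA : associative (@oadd R). Proof. by move=> *; oct_ring. Qed.
Lemma oaddC : commutative (@oadd R). Proof. by move=> *; oct_ring. Qed.
Lemma oadd0 : left_id ozero (@oadd R). Proof. by move=> *; oct_ring. Qed.
Lemma oaddN : left_inverse ozero (oscale (-1)) (@oadd R). Proof. by move=> *; oct_ring. Qed.
HB.instance Definition _ := GRing.isZmodule.Build (oct R) oaddA oaddC oadd0 oaddN.

Lemma oscaleA t1 t2 X : oscale t1 (oscale t2 X) = oscale (t1 * t2) X. Proof. by oct_ring. Qed.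
Lemma oscale1 : left_id 1 (@oscale R). Proof. by move=> *; oct_ring. Qed.
Lemma oscaleDr : right_distributive (@oscale R) +%R. Proof. by move=> *; oct_ring. Qed.
Lemma oscaleDl X : {morph (@oscale R)^~ X : t1 t2 / t1 + t2}. Proof. by move=> *; oct_ring. Qed.
HB.instance Definition _ :=
  GRing.Zmodule_isLmodule.Build R (oct R) oscaleA oscale1 oscaleDr oscaleDl.

Lemma omulDl X Y Z : omul (X + Y) Z = omul X Z + omul Y Z. Proof. by oct_ring. Qed.
Lemma omulDr X Y Z : omul X (Y + Z) = omul X Y + omul X Z. Proof. by oct_ring. Qed.
Lemma omulBl X Y Z : omul (X - Y) Z = omul X Z - omul Y Z. Proof. by oct_ring. Qed.
Lemma omulBr X Y Z : omul X (Y - Z) = omul X Y - omul X Z. Proof. by oct_ring. Qed.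
Lemma omulZl t X Y : omul (t *: X) Y = t *: omul X Y. Proof. by oct_ring. Qed.
Lemma omulZr t X Y : omul X (t *: Y) = t *: omul X Y. Proof. by oct_ring. Qed.
Lemma omul1l X : omul oone X = X. Proof. by oct_ring. Qed.
Lemma omul1r X : omul X oone = X. Proof. by oct_ring. Qed.

Lemma otrD X Y : otr (X + Y) = otr X + otr Y. Proof. by rewrite /otr /=; ring. Qed.
Lemma otrB X Y : otr (X - Y) = otr X - otr Y. Proof. by rewrite /otr /=; ring. Qed.
Lemma otrZ t X : otr (t *: X) = t * otr X. Proof. by rewrite /otr /=; ring. Qed.
Lemma otr1 : otr (@oone R) = 1 + 1. Proof. by []. Qed.
Lemma otr_omulC X Y : otr (omul X Y) = otr (omul Y X).
Proof. by rewrite /otr /omul /dot3 /=; ring. Qed.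
Lemma otr_omulA X Y Z : otr (omul (omul X Y) Z) = otr (omul X (omul Y Z)).
Proof. by rewrite /otr /omul /dot3 /cross3 /add3 /scale3 /opp3 /=; ring. Qed.

Lemma omul_sym X Y : omul X Y + omul Y X =
  otr X *: Y + otr Y *: X + (otr (omul X Y) - otr X * otr Y) *: oone.
Proof. by oct_ring. Qed.

Lemma omul_sqr X : omul X X = otr X *: X - onorm X *: oone.
Proof. by oct_ring. Qed.

(* Linearization of the right alternative law (XY)Y = X(YY). *)
Lemma omul_right_alternative X Y Z :
  omul (omul X Y) Z + omul (omul X Z) Y = omul X (omul Y Z + omul Z Y).
Proof. by oct_ring. Qed.

(* The associator is alternating, so x(yz) + (xy)z is a combination of
   anticommutators. *)
Lemma omul_assoc_anticomm X Y Z : omul X (omul Y Z) + omul (omul X Y) Z =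
  (omul X (omul Y Z) + omul (omul Y Z) X) - omul (omul Y Z + omul Z Y) X
  + omul Z (omul Y X + omul X Y) - omul (omul Z X + omul X Z) Y
  + omul X (omul Z Y + omul Y Z).
Proof. by oct_ring. Qed.

End OctonionIdentities.

Section TraceAlgebra.
Variables (F : fieldType) (n : nat).
Local Notation P := {mpoly F[n * 8]}.
Local Notation inTplus := (@inTplus F n).
Local Notation inTplus2 := (@inTplus2 F n).
Local Notation equivT := (@equivT F n).
Local Notation gen := (@gen F n).
Local Notation W := (weval gen).
Local Notation trw := (@trw F n).
Local Notation trL := (@trL F n).
Local Notation nrm := (@nrm F n).
Implicit Types (f g h : P) (X Y : oct P) (w : word n).

Lemma inTplusN (p : P) : inTplus p -> inTplus (- p).
Proof. by move=> hp; rewrite -scaleN1r; apply: Tp_scale. Qed.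

Lemma inTplusB (p q : P) : inTplus p -> inTplus q -> inTplus (p - q).
Proof. by move=> hp hq; apply: Tp_add => //; apply: inTplusN. Qed.

Lemma inTplusM (p q : P) : inTplus p -> inTplus q -> inTplus (p * q).
Proof.
have homogM p' d : inT p' -> (0 < d)%N -> p' \is d.-homog -> inTplus q -> inTplus (p' * q).
  move=> Tp' d_gt0 hp'; elim=> [q' e Tq' e_gt0 hq'||q1 q2 _ h1 _ h2|c q' _ h].
  - apply: (Tp_hom (d := d + e)); first exact: inT_mul.
      by rewrite addn_gt0 d_gt0.
    exact: dhomogM.
  - by rewrite mulr0; apply: Tp_0.
  - by rewrite mulrDr; apply: Tp_add.
  - by rewrite -scalerAr; apply: Tp_scale.
elim=> [p' d Tp' d_gt0 hp'||p1 p2 _ h1 _ h2|c p' _ h] hq.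
- exact: homogM Tp' d_gt0 hp' hq.
- by rewrite mul0r; apply: Tp_0.
- by rewrite mulrDl; apply: Tp_add; [apply: h1|apply: h2].
- by rewrite -scalerAl; apply: Tp_scale; apply: h.
Qed.

Lemma inTplus2N (p : P) : inTplus2 p -> inTplus2 (- p).
Proof. by move=> hp; rewrite -scaleN1r; apply: Tp2_scale. Qed.

Lemma inTplus2B (p q : P) : inTplus2 p -> inTplus2 q -> inTplus2 (p - q).
Proof. by move=> hp hq; apply: Tp2_add => //; apply: inTplus2N. Qed.

Lemma inTplus2_sign (e : bool) (p : P) : inTplus2 p -> inTplus2 ((-1) ^+ e * p).
Proof. by case: e => hp; rewrite ?mulN1r ?mul1r //; apply: inTplus2N. Qed.

Lemma inTplus2_inTplus (p : P) : inTplus2 p -> inTplus p.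
Proof.
elim=> [f g hf hg||p1 p2 _ h1 _ h2|c p' _ h].
- exact: inTplusM.
- exact: Tp_0.
- exact: Tp_add.
- exact: Tp_scale.
Qed.

Definition oct_homog d (X : oct P) : Prop :=
  [/\ oal X \is d.-homog, c1 (ou X) \is d.-homog, c2 (ou X) \is d.-homog,
      c3 (ou X) \is d.-homog &
  [/\ c1 (ov X) \is d.-homog, c2 (ov X) \is d.-homog, c3 (ov X) \is d.-homog &
      obe X \is d.-homog]].

Ltac homog_solve := repeat first
  [ apply: rpredD | apply: rpredB | rewrite rpredN
  | by apply: dhomogM | by rewrite addnC; apply: dhomogM ].

Lemma oct_homogM d e X Y : oct_homog d X -> oct_homog e Y -> oct_homog (d + e) (omul X Y).
Proof.
case=> h1 h2 h3 h4 [h5 h6 h7 h8]; case=> k1 k2 k3 k4 [k5 k6 k7 k8].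
by rewrite /oct_homog /omul /dot3 /cross3 /add3 /scale3 /opp3 /=;
  split; [homog_solve..|split; homog_solve].
Qed.

Lemma gen_homog i : oct_homog 1 (gen i).
Proof. by split; rewrite ?dhomogX /= ?mdeg1 //; split; rewrite dhomogX /= mdeg1. Qed.

Lemma weval_homog w : oct_homog (wdeg w) (W w).
Proof.
elim: w => [i|u hu v hv]; first exact: gen_homog.
by rewrite /wdeg /= size_cat; apply: oct_homogM.
Qed.

Lemma wdeg_gt0 w : (0 < wdeg w)%N.
Proof. by elim: w => [//|u hu v _]; rewrite /wdeg /= size_cat addn_gt0 hu. Qed.

Lemma inTplus_trw w : inTplus (trw w).
Proof.
apply: (Tp_hom (d := wdeg w)); [exact: inT_tr|exact: wdeg_gt0|].
by case: (weval_homog w) => h1 _ _ _ [_ _ _ h8]; apply: rpredD.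
Qed.

Lemma inTplus_nrm i : inTplus (nrm i).
Proof.
apply: (Tp_hom (d := 2)); [exact: inT_nrm|by []|].
case: (gen_homog i) => h1 h2 h3 h4 [h5 h6 h7 h8].
by rewrite /nrm /onorm /dot3 -[2%N]/(1 + 1)%N; homog_solve.
Qed.

(* The modules M and N of the proof are [wspan inTplus] and [wspan inTplus2]. *)
Inductive wspan (C : P -> Prop) : oct P -> Prop :=
| wspan_word t w : inTplus t -> wspan C (t *: W w)
| wspan_one u : C u -> wspan C (u *: oone)
| wspan_add X Y : wspan C X -> wspan C Y -> wspan C (X + Y).

Local Notation inM := (wspan inTplus).
Local Notation inN := (wspan inTplus2).

Section WordSpan.
Context {C : P -> Prop}.
Hypothesis C0 : C 0.
Hypothesis CN : forall u, C u -> C (- u).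

Lemma wspan0 : wspan C 0.
Proof. by rewrite -(scale0r oone); apply: wspan_one. Qed.

Lemma wspanN X : wspan C X -> wspan C (- X).
Proof.
elim=> [t w ht|u hu|X1 X2 _ h1 _ h2]; rewrite -?scaleNr ?opprD.
- by apply: wspan_word; apply: inTplusN.
- by apply: wspan_one; apply: CN.
- exact: wspan_add.
Qed.

Lemma wspanB X Y : wspan C X -> wspan C Y -> wspan C (X - Y).
Proof. by move=> hX hY; apply: wspan_add => //; apply: wspanN. Qed.

Lemma wspan_sign (e : bool) X : wspan C X -> wspan C ((-1) ^+ e *: X).
Proof. by case: e => hX; rewrite ?scaleN1r ?scale1r //; apply: wspanN. Qed.

End WordSpan.

Lemma wspan_sub X : inN X -> inM X.
Proof.
elim=> [t w ht|u hu|X1 X2 _ h1 _ h2]; first exact: wspan_word.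
  by apply: wspan_one; apply: inTplus2_inTplus.
exact: wspan_add.
Qed.

Lemma omul_wspan_wordl w X : inM X -> inN (omul X (W w)).
Proof.
elim=> [t w' ht|u hu|X1 X2 _ h1 _ h2].
- by rewrite omulZl; apply: (wspan_word _ _ (Mul w' w)).
- by rewrite omulZl omul1l; apply: wspan_word.
- by rewrite omulDl; apply: wspan_add.
Qed.

Lemma omul_wspan_wordr w X : inM X -> inN (omul (W w) X).
Proof.
elim=> [t w' ht|u hu|X1 X2 _ h1 _ h2].
- by rewrite omulZr; apply: (wspan_word _ _ (Mul w w')).
- by rewrite omulZr omul1r; apply: wspan_word.
- by rewrite omulDr; apply: wspan_add.
Qed.

Lemma otr_wspan X : inN X -> inTplus2 (otr X).
Proof.
elim=> [t w ht|u hu|X1 X2 _ h1 _ h2]; rewrite ?otrZ ?otrD.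
- by apply: Tp2_mul => //; apply: inTplus_trw.
- by rewrite otr1 mulrDr mulr1; apply: Tp2_add.
- exact: Tp2_add.
Qed.

Lemma wspan_sym x y : inM (omul (W x) (W y) + omul (W y) (W x)).
Proof.
rewrite omul_sym; apply: wspan_add.
  by apply: wspan_add; apply: wspan_word; apply: inTplus_trw.
apply: wspan_one; apply: inTplusB; first exact: (inTplus_trw (Mul x y)).
by apply: inTplusM; apply: inTplus_trw.
Qed.

Lemma wspan_assoc x y z :
  inM (omul (W x) (omul (W y) (W z)) + omul (omul (W x) (W y)) (W z)).
Proof.
have anti_mull u v w : inM (omul (omul (W u) (W v) + omul (W v) (W u)) (W w)).
  exact/wspan_sub/omul_wspan_wordl/wspan_sym.
have anti_mulr u v w : inM (omul (W w) (omul (W u) (W v) + omul (W v) (W u))).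
  exact/wspan_sub/omul_wspan_wordr/wspan_sym.
rewrite omul_assoc_anticomm.
apply: wspan_add; last exact: anti_mulr.
apply: (wspanB inTplusN); last exact: anti_mull.
apply: wspan_add; last exact: anti_mulr.
apply: (wspanB inTplusN); last exact: anti_mull.
exact: (wspan_sym x (Mul y z)).
Qed.

Definition rmul_gens (X : oct P) (r : seq 'I_n) : oct P :=
  foldl (fun Y j => omul Y (gen j)) X r.

Lemma rmul_gensD X Y r : rmul_gens (X + Y) r = rmul_gens X r + rmul_gens Y r.
Proof. by elim: r X Y => [|j r IH] X Y //=; rewrite omulDl IH. Qed.

Lemma rmul_gens_wspan X r : inN X -> inN (rmul_gens X r).
Proof. by elim: r X => [|j r IH] X hX //=; apply/IH/(omul_wspan_wordl (Letter j))/wspan_sub. Qed.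

Lemma rmul_gens_cat X r1 r2 : rmul_gens X (r1 ++ r2) = rmul_gens (rmul_gens X r1) r2.
Proof. exact: foldl_cat. Qed.

Lemma weval_leftword x r : W (leftword x r) = rmul_gens (gen x) r.
Proof.
rewrite /leftword -[gen x]/(W (Letter x)).
by elim: r (Letter x) => [|j r IH] w //=; rewrite IH.
Qed.

Lemma trL_cons x r : trL (x :: r) = otr (rmul_gens (gen x) r).
Proof. by rewrite /trL /Defs.trw weval_leftword. Qed.

Lemma leftword_rcons (x : 'I_n) r c : leftword x (rcons r c) = Mul (leftword x r) (Letter c).
Proof. by rewrite /leftword foldl_rcons. Qed.

Lemma trL_rcons x r c : trL (x :: rcons r c) = otr (omul (W (leftword x r)) (gen c)).
Proof. by rewrite /trL /Defs.trw leftword_rcons. Qed.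

Lemma letters_leftword (x : 'I_n) r : letters (leftword x r) = x :: r.
Proof. by elim/last_ind: r => [|r j IH] //; rewrite leftword_rcons /= IH -cats1. Qed.

Lemma leftword_mul_normal x1 r1 x2 r2 : exists x r (e : bool),
  perm_eq (x :: r) (x1 :: r1 ++ x2 :: r2) /\
  inM (omul (W (leftword x1 r1)) (W (leftword x2 r2)) - (-1) ^+ e *: W (leftword x r)).
Proof.
elim/last_ind: r2 => [|r2 c [x [r [e [perm_xr hM]]]]].
  exists x1, (rcons r1 x2), false; split; first by rewrite cats1.
  by rewrite leftword_rcons scale1r subrr; apply: wspan0; apply: Tp_0.
exists x, (rcons r c), (~~ e); split.
  by rewrite -!cats1 -(cat_cons x) -(cat_cons x2) catA -(cat_cons x1) perm_cat2r.
set A := W (leftword x1 r1); set B := W (leftword x2 r2); set D := W (leftword x r).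
have -> : omul A (W (leftword x2 (rcons r2 c))) - (-1) ^+ (~~ e) *: W (leftword x (rcons r c))
    = (omul A (omul B (gen c)) + omul (omul A B) (gen c))
      - omul (omul A B - (-1) ^+ e *: D) (gen c).
  by rewrite !leftword_rcons signrN; oct_ring.
apply: (wspanB inTplusN); first exact: (wspan_assoc _ _ (Letter c)).
exact/wspan_sub/(omul_wspan_wordl (Letter c)).
Qed.

Lemma word_left_normal w : exists x r (e : bool),
  perm_eq (x :: r) (letters w) /\ inM (W w - (-1) ^+ e *: W (leftword x r)).
Proof.
elim: w => [i|u [x1 [r1 [e1 [perm1 hM1]]]] v [x2 [r2 [e2 [perm2 hM2]]]]].
  exists i, [::], false; split=> //.
  by rewrite scale1r subrr; apply: wspan0; apply: Tp_0.
have [x [r [e [perm_xr hM]]]] := leftword_mul_normal x1 r1 x2 r2.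
exists x, r, (e1 (+) e2 (+) e); split.
  by apply: (perm_trans perm_xr); rewrite -cat_cons; apply: perm_cat.
set A := W (leftword x1 r1); set B := W (leftword x2 r2); set D := W (leftword x r).
have -> : W (Mul u v) - (-1) ^+ (e1 (+) e2 (+) e) *: D =
    omul (W u - (-1) ^+ e1 *: A) (W v) + (-1) ^+ e1 *: omul A (W v - (-1) ^+ e2 *: B)
    + ((-1) ^+ e1 * (-1) ^+ e2) *: (omul A B - (-1) ^+ e *: D).
  by rewrite !signr_addb; oct_ring.
apply: wspan_add; first apply: wspan_add.
- exact/wspan_sub/omul_wspan_wordl.
- exact/(wspan_sign inTplusN)/wspan_sub/omul_wspan_wordr.
- by rewrite -scalerA; apply/(wspan_sign inTplusN)/(wspan_sign inTplusN).
Qed.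

Definition equivT_sgn f g := exists e : bool, equivT f ((-1) ^+ e * g).

Lemma equivT_sgn_refl f : equivT_sgn f f.
Proof. by exists false; rewrite /equivT mul1r subrr; apply: Tp2_0. Qed.

Lemma equivT_sgn_sym {f g : P} : equivT_sgn f g -> equivT_sgn g f.
Proof.
case=> e hfg; exists e; rewrite /equivT.
have -> : g - (-1) ^+ e * f = - ((-1) ^+ e * (f - (-1) ^+ e * g)).
  by rewrite mulrBr mulrA -expr2 sqrr_sign mul1r opprB.
exact/inTplus2N/inTplus2_sign.
Qed.

Lemma equivT_sgn_trans {f g h : P} : equivT_sgn f g -> equivT_sgn g h -> equivT_sgn f h.
Proof.
case=> e1 hfg [e2 hgh]; exists (e1 (+) e2); rewrite /equivT.
have -> : f - (-1) ^+ (e1 (+) e2) * h =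
    (f - (-1) ^+ e1 * g) + (-1) ^+ e1 * (g - (-1) ^+ e2 * h).
  by rewrite signr_addb mulrBr addrA subrK mulrA.
by apply: Tp2_add => //; apply: inTplus2_sign.
Qed.

Lemma equivT_sgn_inTplus2 {f g : P} : equivT_sgn f g -> inTplus2 g -> inTplus2 f.
Proof.
case=> e hfg hg; rewrite -(subrK ((-1) ^+ e * g) f).
by apply: Tp2_add => //; apply: inTplus2_sign.
Qed.

Lemma equivT_anti {f g h s : P} : inTplus2 (f + g) -> equivT g (s * h) -> equivT f (- s * h).
Proof.
rewrite /equivT => fg_anti equiv_g; have -> : f - - s * h = (f + g) - (g - s * h) by ring.
exact: inTplus2B.
Qed.

Lemma otr_omul_wordl_congr w X Y s :
  inM (X - s *: Y) -> inTplus2 (otr (omul X (W w)) - s * otr (omul Y (W w))).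
Proof. by rewrite -otrZ -omulZl -otrB -omulBl => /(omul_wspan_wordl w)/otr_wspan. Qed.

Lemma otr_omul_wordr_congr w X Y s :
  inM (X - s *: Y) -> inTplus2 (otr (omul (W w) X) - s * otr (omul (W w) Y)).
Proof. by rewrite -otrZ -omulZr -otrB -omulBr => /(omul_wspan_wordr w)/otr_wspan. Qed.

Lemma trw_mul_letter w c : exists t,
  perm_eq t (rcons (letters w) c) /\ equivT_sgn (otr (omul (W w) (gen c))) (trL t).
Proof.
have [x [r [e [perm_xr hM]]]] := word_left_normal w.
exists (x :: rcons r c); split; first by rewrite -rcons_cons -!cats1 perm_cat2r.
by exists e; rewrite /equivT trL_rcons; apply: (otr_omul_wordl_congr (Letter c)).
Qed.

Lemma trw_equiv_trL w : exists t, perm_eq t (letters w) /\ equivT_sgn (trw w) (trL t).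
Proof.
case: w => [i|u v]; first by exists [:: i]; split; last exact: equivT_sgn_refl.
suff [w' [c [perm_w' equiv_w']]] : exists w' c,
    perm_eq (rcons (letters w') c) (letters (Mul u v)) /\
    equivT_sgn (trw (Mul u v)) (otr (omul (W w') (gen c))).
  have [t [perm_t equiv_t]] := trw_mul_letter w' c.
  exists t; split; first exact: perm_trans perm_t perm_w'.
  exact: equivT_sgn_trans equiv_w' equiv_t.
have [x [r [e [perm_xr hM]]]] := word_left_normal v.
have {hM} equiv_v : equivT_sgn (trw (Mul u v)) (otr (omul (W u) (W (leftword x r)))).
  by exists e; apply: otr_omul_wordr_congr.
case/lastP: r perm_xr equiv_v => [|r c] perm_xr equiv_v.
  exists u, x; split=> //.
  by rewrite /= -cats1 perm_cat2l.
exists (Mul u (leftword x r)), c; split.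
  by rewrite /= letters_leftword rcons_cat perm_cat2l.
by rewrite otr_omulA; move: equiv_v; rewrite leftword_rcons.
Qed.

Lemma trL_swap_adj p a b r : (2 < size (p ++ a :: b :: r))%N ->
  inTplus2 (trL (p ++ a :: b :: r) + trL (p ++ b :: a :: r)).
Proof.
case: p => [|x p] size_gt2.
  case: r size_gt2 => [|c r] // _; rewrite !cat0s !trL_cons /= -otrD -rmul_gensD -omulDl.
  exact/otr_wspan/rmul_gens_wspan/(omul_wspan_wordl (Letter c))/(wspan_sym (Letter a) (Letter b)).
rewrite !cat_cons !trL_cons !rmul_gens_cat /= -otrD -rmul_gensD omul_right_alternative -weval_leftword.
exact/otr_wspan/rmul_gens_wspan/omul_wspan_wordr/(wspan_sym (Letter a) (Letter b)).
Qed.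

Lemma trL_swap p a m b r : (2 < size (p ++ a :: m ++ b :: r))%N ->
  inTplus2 (trL (p ++ a :: m ++ b :: r) + trL (p ++ b :: m ++ a :: r)).
Proof.
elim: m p => [|c m IH] p size_gt2; first exact: trL_swap_adj.
(* Swap a with c, then a with b by induction, then c with b. *)
have h1 := trL_swap_adj p a c (m ++ b :: r) size_gt2.
have h2 := IH (rcons p c); rewrite !cat_rcons in h2.
have h3 := trL_swap_adj p b c (m ++ a :: r).
rewrite /= in size_gt2 *.
set A1 := trL (p ++ a :: c :: _) in h1 *; set A2 := trL (p ++ c :: a :: _) in h1 h2.
set B1 := trL (p ++ b :: c :: _) in h3 *; set B2 := trL (p ++ c :: b :: _) in h2 h3.
have -> : A1 + B1 = (A1 + A2) + (B1 + B2) - (A2 + B2) by ring.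
apply: inTplus2B; last by apply: h2; move: size_gt2; rewrite !size_cat.
by apply: Tp2_add => //; apply: h3; move: size_gt2; rewrite !size_cat /= !size_cat.
Qed.

Lemma trL_tperm_split {T : finType} (f : T -> 'I_n) p m r (x y : T) :
  let e := p ++ x :: m ++ y :: r in uniq e -> (2 < size e)%N ->
  inTplus2 (trL [seq f (tperm x y z) | z <- e] + trL [seq f z | z <- e]).
Proof.
move=> e uniq_e size_gt2.
have [x_notin y_notin] : x \notin p ++ m ++ r /\ y \notin p ++ m ++ r.
  move: uniq_e; rewrite /e -cat1s uniq_catCA /= -cat1s catA uniq_catCA /= !mem_cat inE -!orbA.
  case/and3P=> x_notin y_notin _; split=> //.
  by apply: contra x_notin => /or3P[] ->; rewrite ?orbT.
have fix_on s : {subset s <= p ++ m ++ r} ->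
    [seq f (tperm x y z) | z <- s] = [seq f z | z <- s].
  move=> sub_s; apply/eq_in_map => z /sub_s z_in; rewrite tpermD //.
    by apply: contraNneq x_notin => ->.
  by apply: contraNneq y_notin => ->.
have [sub_p sub_m sub_r] : [/\ {subset p <= p ++ m ++ r}, {subset m <= p ++ m ++ r}
                             & {subset r <= p ++ m ++ r}].
  by split=> z z_in; rewrite !mem_cat z_in ?orbT.
rewrite /e !map_cat /= !map_cat /= tpermL tpermR (fix_on p) // (fix_on m) // (fix_on r) //.
by apply: trL_swap; move: size_gt2; rewrite /e !size_cat /= !size_cat /= !size_map.
Qed.

Lemma trL_tperm {T : finType} (f : T -> 'I_n) (e : seq T) (x y : T) :
  uniq e -> x \in e -> y \in e -> x != y -> (2 < size e)%N ->
  inTplus2 (trL [seq f (tperm x y z) | z <- e] + trL [seq f z | z <- e]).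
Proof.
move=> uniq_e x_in y_in x_neq_y; case/splitPr: x_in y_in uniq_e => p1 p2.
rewrite mem_cat inE eq_sym (negbTE x_neq_y) /= => /orP[/splitPr[p m] | /splitPr[m r]].
  by rewrite tpermC -catA /=; apply: trL_tperm_split.
exact: trL_tperm_split.
Qed.

Lemma trL_perm {T : finType} (f : T -> 'I_n) (s : {perm T}) : (2 < #|T|)%N ->
  equivT (trL [seq f (s z) | z <- enum T])
         ((-1) ^+ odd_perm s * trL [seq f z | z <- enum T]).
Proof.
move=> card_gt2; have [ts -> {s}] := prod_tpermP s.
elim: ts f => [|[x y] ts IH] f /=.
  move=> _; rewrite big_nil odd_perm1 mul1r; under eq_map do rewrite perm1.
  by rewrite /equivT subrr; apply: Tp2_0.
case/andP=> /= x_neq_y all_dpair.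
rewrite big_cons odd_permM odd_tperm x_neq_y signr_addb expr1 mulN1r.
under eq_map do rewrite permM.
apply: equivT_anti (IH f all_dpair).
by apply: trL_tperm; rewrite ?enum_uniq ?mem_enum -?cardE.
Qed.

Lemma trL_swap_sgn p a b r :
  equivT_sgn (trL (p ++ a :: b :: r)) (trL (p ++ b :: a :: r)).
Proof.
have [size_gt2|size_le2] := ltnP 2 (size (p ++ a :: b :: r)).
  by exists true; rewrite /equivT expr1 mulN1r opprK; apply: trL_swap_adj.
have [-> ->] : p = [::] /\ r = [::].
  by move: size_le2; case: p r => [|? p] [|? r] //; rewrite /= ?size_cat /= ?addnS.
by rewrite /trL /Defs.trw /= otr_omulC; apply: equivT_sgn_refl.
Qed.

Lemma trL_move p s x r :
  equivT_sgn (trL (p ++ s ++ x :: r)) (trL (p ++ x :: s ++ r)).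
Proof.
elim: s p => [|y s IH] p /=; first exact: equivT_sgn_refl.
apply: equivT_sgn_trans (trL_swap_sgn p y x (s ++ r)).
by have := IH (rcons p y); rewrite !cat_rcons.
Qed.

Lemma trL_perm_sgn p {s t : seq 'I_n} : perm_eq s t -> equivT_sgn (trL (p ++ s)) (trL (p ++ t)).
Proof.
elim: s p t => [|x s IH] p t.
  by rewrite perm_sym => /perm_nilP ->; apply: equivT_sgn_refl.
move=> perm_st; have x_in_t : x \in t by rewrite -(perm_mem perm_st) mem_head.
case/splitPr: x_in_t perm_st => t1 t2 perm_st.
have perm_s : perm_eq s (t1 ++ t2).
  by rewrite -(perm_cons x); apply: perm_trans perm_st _; rewrite -cat1s perm_catCA.
apply: equivT_sgn_trans (equivT_sgn_sym (trL_move p t1 x t2)).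
by have := IH (rcons p x) _ perm_s; rewrite !cat_rcons.
Qed.

Lemma not_uniq_perm_dup {T : eqType} (s : seq T) :
  ~~ uniq s -> exists a t, perm_eq s (a :: a :: t).
Proof.
elim: s => [|x s IH] //=; rewrite negb_and negbK => /orP[x_in_s|/IH[a [t perm_s]]].
  by exists x, (rem x s); rewrite perm_cons; apply: perm_to_rem.
exists a, (x :: t); rewrite -(perm_cons x) in perm_s; apply: perm_trans perm_s _.
by rewrite -[x :: a :: a :: t]/([:: x] ++ [:: a; a] ++ t) perm_catCA.
Qed.

Lemma trL_sqr a c r : inTplus2 (trL (a :: a :: c :: r)).
Proof.
rewrite trL_cons /=; apply/otr_wspan/rmul_gens_wspan.
rewrite omul_sqr omulBl !omulZl omul1l; apply: (wspanB inTplus2N).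
  exact: (wspan_word _ _ (Mul (Letter a) (Letter c))) (inTplus_trw (Letter a)).
exact: (wspan_word _ _ (Letter c)) (inTplus_nrm a).
Qed.

End TraceAlgebra.

Theorem lemma4p2 (F : closedFieldType) (n : nat) :
  (* 1. non-multilinear words of degree > 2 *)
  (forall w : word n, ~~ multilinear w -> (2 < wdeg w)%N ->
     equivT (@trw F n w) 0)
  /\
  (* 2. multilinear words in x_{i1},...,x_{ik}, i1 < ... < ik *)
  (forall (w : word n) (s : seq 'I_n),
     multilinear w -> sorted (fun i j : 'I_n => (i < j)%N) s ->
     perm_eq (letters w) s ->
     exists e : bool, equivT (@trw F n w) ((-1) ^+ e * @trL F n s))
  /\
  (* 3. antisymmetry of left-normed traces for k >= 3 *)
  (forall (k : nat) (i : 'I_k -> 'I_n) (sigma : 'S_k),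
     (3 <= k)%N ->
     (forall a b : 'I_k, (a < b)%N -> (i a < i b)%N) ->
     equivT (@trL F n [seq i (sigma j) | j <- enum 'I_k])
            ((-1) ^+ odd_perm sigma * @trL F n [seq i j | j <- enum 'I_k])).
Proof.
split; [|split].
- move=> w not_multilinear deg_gt2; rewrite /equivT subr0.
  have [t [perm_t equiv_t]] := trw_equiv_trL F n w.
  apply: equivT_sgn_inTplus2 equiv_t _.
  have [a [t' perm_dup]] : exists a t', perm_eq t (a :: a :: t').
    by apply: not_uniq_perm_dup; rewrite (perm_uniq perm_t).
  apply: equivT_sgn_inTplus2 (trL_perm_sgn F n [::] perm_dup) _.
  case: t' perm_dup => [|c t'] perm_dup; last exact: trL_sqr.
  by move: deg_gt2; rewrite /wdeg -(perm_size perm_t) (perm_size perm_dup).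
- move=> w s _ _ perm_ws; have [t [perm_t equiv_t]] := trw_equiv_trL F n w.
  exact: equivT_sgn_trans equiv_t (trL_perm_sgn F n [::] (perm_trans perm_t perm_ws)).
- by move=> k i sigma k_ge3 _; apply: trL_perm; rewrite card_ord.
Qed.
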